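(* Let $R$ be a $u$-ring, let $n$ be a positive integer and let $I$ be a proper ideal of $R$. Then the following conditions are equivalent: (a) $I$ is a strongly $n$-absorbing ideal of $R$; (b) $I$ is an $n$-absorbing ideal of $R$; (c) for every integer $t$ with $0\leq t\leq n$, all ideals $I_1,\dots,I_t$ of $R$ and all elements $x_1,\dots,x_{n-t}\in R$ such that $x_1\cdots x_{n-t}I_1\cdots I_t\not\subseteq I$, one has $$(I:_R x_1\cdots x_{n-t}I_1\cdots I_t)=\Big[\bigcup_{i=1}^{n-t}(I:_R x_1\cdots\widehat{x_i}\cdots x_{n-t}I_1\cdots I_t)\Big]\cup\Big[\bigcup_{j=1}^{t}(I:_R x_1\cdots x_{n-t}I_1\cdots\widehat{I_j}\cdots I_t)\Big];$$ (d) for every integer $t$ with $0\leq t\leq n$, all ideals $I_1,\dots,I_t$ of $R$ and all elements $x_1,\dots,x_{n-t}\in R$ such that $x_1\cdots x_{n-t}I_1\cdots I_t\not\subseteq I$, either $(I:_R x_1\cdots x_{n-t}I_1\cdots I_t)=(I:_R x_1\cdots\widehat{x_i}\cdots x_{n-t}I_1\cdots I_t)$ for some $1\leq i\leq n-t$, or $(I:_R x_1\cdots x_{n-t}I_1\cdots I_t)=(I:_R x_1\cdots x_{n-t}I_1\cdots\widehat{I_j}\cdots I_t)$ for some $1\leq j\leq t$.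
   Context: All rings are commutative with $1\neq 0$. A ring $R$ is a $u$-ring if whenever an ideal of $R$ is contained in a finite union of ideals of $R$, it is contained in one of those ideals. A proper ideal $I$ of $R$ is $n$-absorbing if whenever $a_1\cdots a_{n+1}\in I$ with $a_1,\dots,a_{n+1}\in R$, there are $n$ of the $a_i$'s whose product is in $I$; it is strongly $n$-absorbing if whenever $I_1\cdots I_{n+1}\subseteq I$ for ideals $I_1,\dots,I_{n+1}$ of $R$, there are $n$ of the $I_i$'s whose product is contained in $I$. For an ideal (or element) $K$, $(I:_R K)=\{r\in R: rK\subseteq I\}$; $x_1\cdots x_{n-t}I_1\cdots I_t$ denotes the ideal product (with the elements regarded as principal ideals); a hat $\widehat{\ }$ denotes omission of that factor; an empty product is $R$. *)

From mathcomp Require Import all_boot all_order all_algebra.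
Set Implicit Arguments. Unset Strict Implicit. Unset Printing Implicit Defensive.
Import GRing.Theory.
Local Open Scope ring_scope.

Section IdealDefs.
Variable R : comNzRingType.

Definition is_ideal (I : R -> Prop) : Prop :=
  [/\ I 0, (forall x y, I x -> I y -> I (x + y)) & (forall r x, I x -> I (r * x))].

Definition pr_ideal (I : R -> Prop) : Prop := is_ideal I /\ ~ I 1.

Definition subI (I J : R -> Prop) : Prop := forall x, I x -> J x.

Definition gen (S : R -> Prop) : R -> Prop :=
  fun x => forall J, is_ideal J -> subI S J -> J x.

Definition princ (x : R) : R -> Prop := fun y => exists r, y = r * x.

Fixpoint prodset (Is : seq (R -> Prop)) : R -> Prop :=
  match Is with
  | [::] => fun x => x = 1
  | J :: Js => fun x => exists a b, [/\ J a, prodset Js b & x = a * b]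
  end.

(* ideal product I_1 ... I_k (empty product = R) *)
Definition iprod (Is : seq (R -> Prop)) : R -> Prop := gen (prodset Is).

Definition colon (I K : R -> Prop) : R -> Prop := fun r => forall k, K k -> I (r * k).

Definition u_ring : Prop :=
  forall (I : R -> Prop) (k : nat) (Js : 'I_k -> (R -> Prop)),
    is_ideal I -> (forall j, is_ideal (Js j)) ->
    subI I (fun x => exists j, Js j x) ->
    exists j, subI I (Js j).

Definition n_absorbing (n : nat) (I : R -> Prop) : Prop :=
  pr_ideal I /\
  forall a : 'I_n.+1 -> R, I (\prod_(j < n.+1) a j) ->
    exists i : 'I_n.+1, I (\prod_(j < n.+1 | j != i) a j).

Definition strongly_n_absorbing (n : nat) (I : R -> Prop) : Prop :=
  pr_ideal I /\
  forall Js : 'I_n.+1 -> (R -> Prop), (forall j, is_ideal (Js j)) ->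
    subI (iprod [seq Js j | j <- enum 'I_n.+1]) I ->
    exists i : 'I_n.+1, subI (iprod [seq Js j | j <- enum 'I_n.+1 & j != i]) I.

(* x_1 ... x_m I_1 ... I_t  (elements regarded as principal ideals) *)
Definition mixprod (m t : nat) (x : 'I_m -> R) (Js : 'I_t -> (R -> Prop)) : R -> Prop :=
  iprod ([seq princ (x i) | i <- enum 'I_m] ++ [seq Js j | j <- enum 'I_t]).

Definition mixprod_omit_x (m t : nat) (x : 'I_m -> R) (Js : 'I_t -> (R -> Prop))
  (i0 : 'I_m) : R -> Prop :=
  iprod ([seq princ (x i) | i <- enum 'I_m & i != i0] ++ [seq Js j | j <- enum 'I_t]).

Definition mixprod_omit_I (m t : nat) (x : 'I_m -> R) (Js : 'I_t -> (R -> Prop))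
  (j0 : 'I_t) : R -> Prop :=
  iprod ([seq princ (x i) | i <- enum 'I_m] ++ [seq Js j | j <- enum 'I_t & j != j0]).

Definition cond_c (n : nat) (I : R -> Prop) : Prop :=
  forall (t : nat), (t <= n)%N ->
  forall (Js : 'I_t -> (R -> Prop)) (x : 'I_(n - t)%N -> R),
    (forall j, is_ideal (Js j)) ->
    ~ subI (mixprod x Js) I ->
    forall r, colon I (mixprod x Js) r <->
      ((exists i, colon I (mixprod_omit_x x Js i) r) \/
       (exists j, colon I (mixprod_omit_I x Js j) r)).

Definition cond_d (n : nat) (I : R -> Prop) : Prop :=
  forall (t : nat), (t <= n)%N ->
  forall (Js : 'I_t -> (R -> Prop)) (x : 'I_(n - t)%N -> R),
    (forall j, is_ideal (Js j)) ->
    ~ subI (mixprod x Js) I ->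
    (exists i, forall r, colon I (mixprod x Js) r <-> colon I (mixprod_omit_x x Js i) r) \/
    (exists j, forall r, colon I (mixprod x Js) r <-> colon I (mixprod_omit_I x Js j) r).

End IdealDefs.

From mathcomp Require Import all_boot all_order all_algebra.
From Stdlib Require Import Classical.
Set Implicit Arguments. Unset Strict Implicit. Unset Printing Implicit Defensive.
Import GRing.Theory.
Local Open Scope ring_scope.

(* The heart of the proof is (b) => (a): starting from n-absorption for elements,
   the factors of a product F_1 ... F_(n+1) of ideals contained in I are turned
   from principal ideals into arbitrary ones, one position j0 at a time. If F_j0
   cannot be dropped, then for every b in F_j0 the family with F_j0 replaced by Rb
   drops some other factor F_i, i.e. b lies in the colon ideal
   (I : prod_(j <> i, j0) F_j); as R is a u-ring, all of F_j0 lies in one of these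
   n colon ideals, so the corresponding F_i can be dropped. Strong absorption for
   the n+1 ideals Rr, Rx_1, ..., Rx_(n-t), I_1, ..., I_t gives (c); the u-ring
   property applied to the union in (c) gives (d); and (c) for t = 0 is
   n-absorption. *)

Definition rem_at {T : Type} (i : nat) (s : seq T) := take i s ++ drop i.+1 s.

Lemma map_rem_at {T U : Type} (f : T -> U) i s : map f (rem_at i s) = rem_at i (map f s).
Proof. by rewrite /rem_at map_cat map_take map_drop. Qed.

Lemma rem_at_catl {T : Type} i (s1 s2 : seq T) :
  (i < size s1)%N -> rem_at i (s1 ++ s2) = rem_at i s1 ++ s2.
Proof.
move=> lt_i_s1; rewrite /rem_at take_cat drop_cat lt_i_s1 -catA; congr (_ ++ _).
case: ltnP => // le_s1_Si.
have -> : i.+1 = size s1 by apply/eqP; rewrite eqn_leq le_s1_Si lt_i_s1.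
by rewrite subnn drop0 drop_size.
Qed.

Lemma rem_at_catr {T : Type} i (s1 s2 : seq T) :
  (size s1 <= i)%N -> rem_at i (s1 ++ s2) = s1 ++ rem_at (i - size s1) s2.
Proof.
move=> le_s1_i; rewrite /rem_at take_cat drop_cat ltnNge le_s1_i /=.
by rewrite ltnNge (leqW le_s1_i) /= catA subSn.
Qed.

Lemma map_enum_neq {T : Type} k (G : 'I_k -> T) (i : 'I_k) :
  [seq G j | j <- enum 'I_k & j != i] = rem_at i [seq G j | j <- enum 'I_k].
Proof. by rewrite -rem_filter ?enum_uniq // remE index_enum_ord map_rem_at. Qed.

Lemma map_nth_enum {T : Type} k (d : T) (s : seq T) :
  size s = k -> [seq nth d s j | j : 'I_k <- enum 'I_k] = s.
Proof.
move=> <-; rewrite (map_comp (nth d s) val) val_enum_ord.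
by rewrite map_nth_iota0 // take_size.
Qed.

Section Ideals.
Variable R : comNzRingType.
Implicit Types (I J K S : R -> Prop) (L : seq (R -> Prop)) (r x y : R).

Lemma is_ideal_setT : @is_ideal R (fun _ => True).
Proof. by []. Qed.

Lemma is_ideal_princ x : is_ideal (princ x).
Proof.
split; first by exists 0; rewrite mul0r.
- by move=> _ _ [a ->] [b ->]; exists (a + b); rewrite mulrDl.
- by move=> s _ [a ->]; exists (s * a); rewrite mulrA.
Qed.

Lemma is_ideal_colon I K : is_ideal I -> is_ideal (colon I K).
Proof.
case=> I0 ID IM; split.
- by move=> k _; rewrite mul0r.
- by move=> x y Ix Iy k Kk; rewrite mulrDl; apply: ID; [apply: Ix | apply: Iy].
- by move=> s x Ix k Kk; rewrite -mulrA; apply: IM; apply: Ix.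
Qed.

Lemma is_ideal_mul_preimage I r : is_ideal I -> is_ideal (fun k => I (r * k)).
Proof.
case=> I0 ID IM; split; first by rewrite mulr0.
- by move=> x y Ix Iy; rewrite mulrDr; apply: ID.
- by move=> s x Ix; rewrite mulrCA; apply: IM.
Qed.

Lemma is_ideal_gen S : is_ideal (gen S).
Proof.
split.
- by move=> J [J0 _ _] _.
- by move=> x y Sx Sy J hJ SJ; case: (hJ) => _ JD _; apply: JD; [apply: Sx | apply: Sy].
- by move=> s x Sx J hJ SJ; case: (hJ) => _ _ JM; apply: JM; apply: Sx.
Qed.

Lemma sub_gen S : subI S (gen S).
Proof. by move=> x Sx J _; apply. Qed.

Lemma gen_min S J : is_ideal J -> subI S J -> subI (gen S) J.
Proof. by move=> hJ SJ x; apply. Qed.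

Lemma iprod_subP I L : is_ideal I -> subI (iprod L) I <-> subI (prodset L) I.
Proof.
move=> hI; split=> LI; last exact: gen_min.
by move=> x Lx; apply: LI; apply: sub_gen.
Qed.

Lemma colon_iprodP I L r : is_ideal I ->
  colon I (iprod L) r <-> forall z, prodset L z -> I (r * z).
Proof. by move=> hI; apply: (iprod_subP _ (is_ideal_mul_preimage r hI)). Qed.

Lemma iprod_cons_princ_subP I L r : is_ideal I ->
  subI (iprod (princ r :: L)) I <-> colon I (iprod L) r.
Proof.
move=> hI; rewrite (colon_iprodP _ _ hI) (iprod_subP _ hI); split=> LI.
  by move=> z Lz; apply: LI; exists r, z; split => //; exists 1; rewrite mul1r.
move=> _ [_ [z [[a ->] Lz ->]]]; rewrite -mulrA; case: hI => _ _ IM.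
by apply: IM; apply: LI.
Qed.

Lemma colon_antimono I K1 K2 : subI K1 K2 -> subI (colon I K2) (colon I K1).
Proof. by move=> K12 r rK2 k /K12; apply: rK2. Qed.

Lemma prodset_rem_at L i x : (i < size L)%N -> prodset L x ->
  exists y z, prodset (rem_at i L) z /\ x = y * z.
Proof.
elim: L i x => [|K L IH] [|i] x //= lt_i_L [a [b [Ka Lb ->]]].
  by exists a, b; rewrite /rem_at /= drop0.
have [y [z [Lz ->]]] := IH i b lt_i_L Lb.
by exists y, (a * z); split; [exists a, z | rewrite mulrCA].
Qed.

Lemma iprod_rem_at L i : (i < size L)%N -> subI (iprod L) (iprod (rem_at i L)).
Proof.
move=> lt_i_L; apply: gen_min; first exact: is_ideal_gen.
move=> x /(prodset_rem_at lt_i_L) [y [z [Lz ->]]].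
by case: (is_ideal_gen (prodset (rem_at i L))) => _ _ GM; apply: GM; apply: sub_gen.
Qed.

Definition family_prods N (F : 'I_N -> R -> Prop) (P : pred 'I_N) : R -> Prop :=
  fun z => exists2 a : 'I_N -> R, (forall j, P j -> F j (a j)) & z = \prod_(j | P j) a j.

Lemma sub_family_prods N (F G : 'I_N -> R -> Prop) (P : pred 'I_N) :
  (forall j, P j -> subI (F j) (G j)) -> subI (family_prods F P) (family_prods G P).
Proof. by move=> FG _ [a Fa ->]; exists a => // j Pj; apply/FG/Fa. Qed.

Lemma prodset_map_uniq N (F : 'I_N -> R -> Prop) (s : seq 'I_N) x : uniq s ->
  prodset (map F s) x <->
  exists2 a : 'I_N -> R, (forall j, j \in s -> F j (a j)) & x = \prod_(j <- s) a j.
Proof.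
elim: s x => [|j0 s IH] x /=.
  by move=> _; split=> [->|[a _ ->]]; [exists (fun _ => 1) | ]; rewrite ?big_nil.
case/andP=> j0s us; split.
  case=> u [v [Fu /(IH _ us) [a Fa ->] ->]].
  exists [eta a with j0 |-> u] => [j|].
    by rewrite inE /=; case: eqP => [-> //|_ /Fa].
  rewrite big_cons /= eqxx; congr (_ * _); apply: eq_big_seq => j js.
  by case: eqP js => // ->; rewrite (negbTE j0s).
case=> a Fa ->; exists (a j0), (\prod_(j <- s) a j); split.
- by apply: Fa; rewrite inE eqxx.
- by apply/(IH _ us); exists a => // j js; apply: Fa; rewrite inE js orbT.
- by rewrite big_cons.
Qed.

Lemma iprod_family_subP I N (F : 'I_N -> R -> Prop) (P : pred 'I_N) : is_ideal I ->
  subI (iprod [seq F j | j <- enum 'I_N & P j]) I <-> subI (family_prods F P) I.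
Proof.
move=> hI; rewrite iprod_subP //.
have uP : uniq [seq j <- enum 'I_N | P j] by rewrite filter_uniq ?enum_uniq.
have prodE (a : 'I_N -> R) : \prod_(j <- [seq j <- enum 'I_N | P j]) a j = \prod_(j | P j) a j.
  by rewrite big_filter big_enum_cond; apply: eq_bigl.
split=> FI x.
  case=> a Fa ->; rewrite -prodE; apply: FI; apply/prodset_map_uniq => //.
  by exists a => // j; rewrite mem_filter => /andP [/Fa].
case/(prodset_map_uniq _ _ uP) => a Fa ->; rewrite prodE; apply: FI.
by exists a => // j Pj; apply: Fa; rewrite mem_filter Pj mem_enum.
Qed.

Lemma iprod_family_subTP I N (F : 'I_N -> R -> Prop) : is_ideal I ->
  subI (iprod [seq F j | j <- enum 'I_N]) I <-> subI (family_prods F predT) I.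
Proof. by move=> hI; rewrite -(iprod_family_subP _ _ hI) filter_predT. Qed.

Lemma family_prods_princ_subP I N (a : 'I_N -> R) (P : pred 'I_N) : is_ideal I ->
  subI (family_prods (fun j => princ (a j)) P) I <-> I (\prod_(j | P j) a j).
Proof.
case=> I0 ID IM; split=> [aI | Ia _ [c ca ->]].
  by apply: aI; exists a => // j _; exists 1; rewrite mul1r.
have [s ->] : exists s, \prod_(j | P j) c j = s * \prod_(j | P j) a j.
  apply: (big_ind2 (fun u v => exists s, u = s * v)).
  - by exists 1; rewrite mul1r.
  - by move=> u1 u2 v1 v2 [s1 ->] [s2 ->]; exists (s1 * s2); rewrite mulrACA.
  - by move=> j /ca [s ->]; exists s.
exact: IM.
Qed.

Definition absorbs I N (F : 'I_N -> R -> Prop) : Prop :=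
  subI (family_prods F predT) I -> exists i, subI (family_prods F (fun j => j != i)) I.

Lemma absorbs_eq I N (F G : 'I_N -> R -> Prop) :
  (forall j, F j = G j) -> absorbs I F -> absorbs I G.
Proof.
move=> FG absF GI.
have FG_sub P : subI (family_prods F P) (family_prods G P) /\
                subI (family_prods G P) (family_prods F P).
  by split; apply: sub_family_prods => j _; rewrite FG.
have [|i iI] := absF; first by move=> x /(proj1 (FG_sub _)) /GI.
by exists i => x /(proj2 (FG_sub _)) /iI.
Qed.

Lemma n_absorbing_absorbs_princ n I (a : 'I_n.+1 -> R) :
  n_absorbing n I -> absorbs I (fun j => princ (a j)).
Proof.
case=> [[hI _] absorbs_elt] /(family_prods_princ_subP _ _ hI) /absorbs_elt [i iI].
by exists i; apply/(family_prods_princ_subP _ _ hI).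
Qed.

Lemma absorbs_update (uR : u_ring R) I n (F : 'I_n.+1 -> R -> Prop) (j0 : 'I_n.+1) :
  is_ideal I -> (forall j, is_ideal (F j)) ->
  (forall b, F j0 b -> absorbs I [eta F with j0 |-> princ b]) -> absorbs I F.
Proof.
move=> hI hF absorbs_b FI.
have [|no_j0] := classic (subI (family_prods F (fun j => j != j0)) I); first by exists j0.
pose Q (i : 'I_n) (j : 'I_n.+1) := (j != lift j0 i) && (j != j0).
pose C i := colon I (family_prods F (Q i)).
have cover : subI (F j0) (fun b => exists i, C i b).
  move=> b Fb.
  have [|ib ibI] := absorbs_b b Fb.
    move=> x Fx; apply: FI; move: x Fx; apply: sub_family_prods => j _ y /=.
    by case: eqP => [-> [s ->]|//]; case: (hF j0) => _ _ FM; apply: FM.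
  have j0_ib : j0 != ib.
    apply/eqP=> j0E; rewrite -j0E in ibI; apply: no_j0 => x Fx; apply: ibI; move: x Fx.
    by apply: sub_family_prods => j /negbTE j_j0; rewrite /= j_j0.
  have [i ibE _] := unlift_some j0_ib.
  exists i => _ [c Fc ->].
  have -> : b * \prod_(j | Q i j) c j = \prod_(j | j != ib) [eta c with j0 |-> b] j.
    rewrite [RHS](bigD1 j0) //= eqxx /Q -ibE; congr (_ * _).
    by apply: eq_bigr => j /andP [_ /negbTE /= ->].
  apply: ibI; exists [eta c with j0 |-> b] => [j /=|//].
  case: ifP => [_ _|j_j0 j_ib]; first by exists 1; rewrite mul1r.
  by apply: Fc; rewrite /Q -ibE j_ib j_j0.
have [i Ci] := uR _ _ _ (hF j0) (fun i => is_ideal_colon (family_prods F (Q i)) hI) cover.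
exists (lift j0 i) => _ [a Fa ->].
rewrite (bigD1 j0) /=; last exact: neq_lift.
apply: (Ci (a j0)); first by apply: Fa; apply: neq_lift.
by exists a => // j /andP [? ?]; apply: Fa.
Qed.

Lemma n_absorbing_absorbs (uR : u_ring R) n I : n_absorbing n I ->
  forall F : 'I_n.+1 -> R -> Prop, (forall j, is_ideal (F j)) -> absorbs I F.
Proof.
move=> nabs; have [[hI _] _] := nabs.
suff principal_from k : forall F : 'I_n.+1 -> R -> Prop, (forall j, is_ideal (F j)) ->
    (forall j : 'I_n.+1, (k <= j)%N -> exists c, F j = princ c) -> absorbs I F.
  by move=> F hF; apply: (principal_from n.+1) => // j; rewrite leqNgt ltn_ord.
elim: k => [|k IH] F hF Fprinc.
  have [a Fa] := fin_all_exists (fun j => Fprinc j (leq0n j)).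
  apply: (absorbs_eq (F := fun j => princ (a j))) => [j|]; first by rewrite Fa.
  exact: n_absorbing_absorbs_princ.
have [lt_k_n|le_n_k] := ltnP k n.+1; last first.
  by apply: IH => // j le_k_j; have := leq_trans (ltn_ord j) le_n_k; rewrite ltnNge le_k_j.
apply: (absorbs_update (j0 := Ordinal lt_k_n) uR hI hF) => b _; apply: IH => j /=.
  by case: eqP => _; [apply: is_ideal_princ | apply: hF].
case: eqP => [_ _|/eqP j_k le_k_j]; first by exists b.
apply: Fprinc; rewrite ltn_neqAle le_k_j andbT.
by apply: contra j_k => /eqP j_k; apply/eqP/val_inj.
Qed.

Lemma prod_ord_recr_cond N (a : 'I_N.+1 -> R) (P : pred 'I_N.+1) :
  \prod_(j | P j) a j =
  \prod_(i < N | P (widen_ord (leqnSn N) i)) a (widen_ord (leqnSn N) i) *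
  (if P ord_max then a ord_max else 1).
Proof. by rewrite big_mkcond big_ord_recr /= -big_mkcond. Qed.

Lemma iprod_princ_subP I m (x : 'I_m -> R) (P : pred 'I_m) : is_ideal I ->
  subI (iprod [seq princ (x i) | i <- enum 'I_m & P i]) I <-> I (\prod_(i | P i) x i).
Proof.
by move=> hI; rewrite (iprod_family_subP _ _ hI) (family_prods_princ_subP _ _ hI).
Qed.

Section MixedProducts.
Variables (m t : nat) (x : 'I_m -> R) (Js : 'I_t -> R -> Prop).

Definition mixseq := [seq princ (x i) | i <- enum 'I_m] ++ [seq Js j | j <- enum 'I_t].

Lemma size_mixseq : size mixseq = (m + t)%N.
Proof. by rewrite /mixseq size_cat !size_map -!enumT !size_enum_ord. Qed.

Lemma mixprod_omit_x_rem_at i : mixprod_omit_x x Js i = iprod (rem_at i mixseq).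
Proof. by rewrite /mixprod_omit_x map_enum_neq rem_at_catl // size_map size_enum_ord. Qed.

Lemma mixprod_omit_I_rem_at j : mixprod_omit_I x Js j = iprod (rem_at (m + j) mixseq).
Proof.
rewrite /mixprod_omit_I map_enum_neq rem_at_catr size_map size_enum_ord ?leq_addr //.
by rewrite addKn.
Qed.

Lemma iprod_rem_at_mixseq i : (i < m + t)%N ->
  (exists i0, iprod (rem_at i mixseq) = mixprod_omit_x x Js i0) \/
  (exists j0, iprod (rem_at i mixseq) = mixprod_omit_I x Js j0).
Proof.
move=> lt_i_mt; have [lt_i_m|le_m_i] := ltnP i m.
  by left; exists (Ordinal lt_i_m); rewrite mixprod_omit_x_rem_at.
have lt_im_t : (i - m < t)%N by rewrite ltn_subLR.
by right; exists (Ordinal lt_im_t); rewrite mixprod_omit_I_rem_at /= subnKC.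
Qed.

Lemma colon_mixprod_omit I r : is_ideal I ->
  (exists i, colon I (mixprod_omit_x x Js i) r) \/
  (exists j, colon I (mixprod_omit_I x Js j) r) ->
  colon I (mixprod x Js) r.
Proof.
move=> hI [[i]|[j]]; apply: colon_antimono.
  by rewrite mixprod_omit_x_rem_at; apply: iprod_rem_at; rewrite size_mixseq ltn_addr.
by rewrite mixprod_omit_I_rem_at; apply: iprod_rem_at; rewrite size_mixseq ltn_add2l.
Qed.

Lemma is_ideal_nth_cons_mixseq r i : (forall j, is_ideal (Js j)) ->
  is_ideal (nth (fun _ => True) (princ r :: mixseq) i).
Proof.
have nth_map T (f : T -> R -> Prop) s k : (forall u, is_ideal (f u)) ->
    is_ideal (nth (fun _ => True) (map f s) k).
  by move=> hf; elim: s k => [|u s IH] [|k] //=; apply: IH.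
move=> hJ; case: i => [|i] /=; first exact: is_ideal_princ.
by rewrite nth_cat; case: ifP => _; apply: nth_map => // u; apply: is_ideal_princ.
Qed.

End MixedProducts.

Section Equivalences.
Variables (n : nat) (I : R -> Prop).
Hypothesis pI : pr_ideal I.

Let hI : is_ideal I := proj1 pI.

Lemma strongly_n_absorbingP :
  strongly_n_absorbing n I <->
  forall F : 'I_n.+1 -> R -> Prop, (forall j, is_ideal (F j)) -> absorbs I F.
Proof.
split=> [[_ strong] F hF FI | absorbs_all].
  have [i iI] := strong F hF (proj2 (iprod_family_subTP _ hI) FI).
  by exists i; apply/(iprod_family_subP _ _ hI).
split=> // F hF /(iprod_family_subTP _ hI) /(absorbs_all F hF) [i iI].
by exists i; apply/(iprod_family_subP _ _ hI).
Qed.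

Lemma strongly_n_absorbing_n_absorbing :
  strongly_n_absorbing n I -> n_absorbing n I.
Proof.
move=> strong; split=> // a aI.
have [|i iI] := proj1 strongly_n_absorbingP strong (fun j => princ (a j))
  (fun j => is_ideal_princ (a j)); first exact/(family_prods_princ_subP _ _ hI).
by exists i; apply/(family_prods_princ_subP _ _ hI).
Qed.

Lemma n_absorbing_strongly_n_absorbing :
  u_ring R -> n_absorbing n I -> strongly_n_absorbing n I.
Proof.
by move=> uR nabs; apply/strongly_n_absorbingP; apply: n_absorbing_absorbs.
Qed.

Lemma strongly_n_absorbing_seq L : strongly_n_absorbing n I ->
  size L = n.+1 -> (forall i, is_ideal (nth (fun _ => True) L i)) ->
  subI (iprod L) I -> exists2 i, (i < n.+1)%N & subI (iprod (rem_at i L)) I.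
Proof.
case=> _ strong sizeL hL LI.
pose F (j : 'I_n.+1) := nth (fun _ => True) L j.
have FL : [seq F j | j <- enum 'I_n.+1] = L by apply: map_nth_enum.
have [|i iI] := strong F (fun j => hL j); first by rewrite FL.
by exists i; rewrite // -FL -map_enum_neq.
Qed.

Lemma strongly_n_absorbing_cond_c : strongly_n_absorbing n I -> cond_c n I.
Proof.
move=> strong t le_t_n Js x hJ not_sub r; split; last exact: colon_mixprod_omit.
move/(iprod_cons_princ_subP _ _ hI) => rI.
have sizeL : size (princ r :: mixseq x Js) = n.+1 by rewrite /= size_mixseq subnK.
have [[|i] lt_i_n] := strongly_n_absorbing_seq strong sizeL
  (fun i => is_ideal_nth_cons_mixseq x r i hJ) rI.
  by rewrite /rem_at /= drop0.
have -> : rem_at i.+1 (princ r :: mixseq x Js) = princ r :: rem_at i (mixseq x Js) by [].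
move/(iprod_cons_princ_subP _ _ hI).
have lt_i_mt : (i < n - t + t)%N by rewrite subnK.
by case: (iprod_rem_at_mixseq x Js lt_i_mt) => [[i0 ->]|[j0 ->]] ri;
  [left; exists i0|right; exists j0].
Qed.

Lemma cond_c_cond_d : u_ring R -> cond_c n I -> cond_d n I.
Proof.
move=> uR cc t le_t_n Js x hJ not_sub.
pose G (o : 'I_(n - t + t)) := match split o with
  | inl i => colon I (mixprod_omit_x x Js i)
  | inr j => colon I (mixprod_omit_I x Js j) end.
have hG o : is_ideal (G o) by rewrite /G; case: split => ?; apply: is_ideal_colon.
have cover : subI (colon I (mixprod x Js)) (fun r => exists o, G o r).
  move=> r /(cc t le_t_n Js x hJ not_sub r) [[i ri]|[j rj]].
    by exists (unsplit (inl i)); rewrite /G unsplitK.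
  by exists (unsplit (inr j)); rewrite /G unsplitK.
have [o oG] := uR _ _ _ (is_ideal_colon (mixprod x Js) hI) hG cover.
rewrite /G in oG; case: (split o) oG => [i|j] sub.
  by left; exists i => r; split=> [/sub //|ri]; apply: colon_mixprod_omit hI _; left; exists i.
by right; exists j => r; split=> [/sub //|rj]; apply: colon_mixprod_omit hI _; right; exists j.
Qed.

Lemma cond_d_cond_c : cond_d n I -> cond_c n I.
Proof.
move=> cd t le_t_n Js x hJ not_sub r; split; last exact: colon_mixprod_omit.
by case: (cd t le_t_n Js x hJ not_sub) => [[i /(_ r) []]|[j /(_ r) []]] ri _ /ri;
  [left; exists i|right; exists j].
Qed.

Lemma cond_c_n_absorbing : cond_c n I -> n_absorbing n I.
Proof.
move=> cc; split=> // a aI.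
have := cc 0%N (leq0n n); rewrite subn0 => cc0.
pose x (i : 'I_n) := a (widen_ord (leqnSn n) i).
pose J0 (j : 'I_0) : R -> Prop := fun _ => True.
have mixE : mixprod x J0 = iprod [seq princ (x i) | i <- enum 'I_n & predT i].
  by rewrite /mixprod enum_ord0 cats0 filter_predT.
have [sub|not_sub] := classic (subI (mixprod x J0) I).
  exists ord_max; rewrite prod_ord_recr_cond eqxx mulr1.
  move: sub; rewrite mixE (iprod_princ_subP _ _ hI); congr I; apply: eq_bigl => i.
  by rewrite -(inj_eq val_inj) /= neq_ltn ltn_ord.
have [|[i]|[[]]] // := proj1 (cc0 J0 x (fun _ => is_ideal_setT) not_sub (a ord_max)).
  rewrite mixE; apply/(iprod_princ_subP _ _ (is_ideal_mul_preimage _ hI)).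
  by rewrite mulrC; move: aI; rewrite big_ord_recr.
move=> ri; exists (widen_ord (leqnSn n) i).
rewrite prod_ord_recr_cond -(inj_eq val_inj) /= eq_sym neq_ltn ltn_ord mulrC.
move: ri; rewrite /mixprod_omit_x enum_ord0 cats0.
move/(iprod_princ_subP _ _ (is_ideal_mul_preimage _ hI)).
by congr I; congr (_ * _); apply: eq_bigl.
Qed.

End Equivalences.

End Ideals.

Theorem mainTheorem1 (R : comNzRingType) (n : nat) (I : R -> Prop) :
  @u_ring R -> (0 < n)%N -> pr_ideal I ->
  (strongly_n_absorbing n I <-> n_absorbing n I) /\
  (n_absorbing n I <-> cond_c n I) /\
  (cond_c n I <-> cond_d n I).
Proof.
(* The equivalences hold for every n. *)
move=> uR _ pI; split; [|split]; split.
- exact: strongly_n_absorbing_n_absorbing.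
- exact: n_absorbing_strongly_n_absorbing.
- by move/(n_absorbing_strongly_n_absorbing pI uR); apply: strongly_n_absorbing_cond_c.
- exact: cond_c_n_absorbing.
- exact: cond_c_cond_d.
- exact: cond_d_cond_c.
Qed.
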